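(* Let $S$ be a numerical semigroup with minimal generators $a_1<a_2<\cdots<a_\nu$ ($\nu\ge 2$), multiplicity $\mu=a_1$ and conductor $c$, and suppose $a_2>\frac{c+\mu}{3}$. Let $\pi:\mathbb{Z}\to\mathbb{Z}/\mu\mathbb{Z}$ be the quotient map, $P=\{a_1,\dots,a_\nu\}$, $P_1=\{a\in P\setminus\{\mu\}: \tfrac13(c+\mu)<a<\tfrac12(c+\mu)\}$, $P_2=\{a\in P\setminus\{\mu\}: \tfrac12(c+\mu)\le a<\tfrac23(c+\mu)\}$, and $A=\pi(P)$, $A_1=\pi(P_1)$, $A_2=\pi(P_2)$. Then $$\mathbb{Z}/\mu\mathbb{Z}=A\cup(A_1+A_1)\cup(A_1+A_2).$$
   Context: A numerical semigroup is a submonoid $S\subseteq\mathbb{N}$ (containing $0$, closed under addition) with finite complement. Its minimal generating set is the unique minimal set of generators; its cardinality $\nu$ is the embedding dimension, and the smallest minimal generator $\mu$ is the multiplicity. The conductor $c$ is the least integer with $c+\mathbb{N}\subseteq S$ (i.e. Frobenius number plus one). For subsets $X,Y$ of $\mathbb{Z}/\mu\mathbb{Z}$, $X+Y=\{x+y: x\in X,y\in Y\}$. *)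

From mathcomp Require Import all_boot all_order all_algebra.
Set Implicit Arguments. Unset Strict Implicit. Unset Printing Implicit Defensive.

Definition numerical_semigroup (S : pred nat) : Prop :=
  [/\ S 0,
      (forall x y, S x -> S y -> S (x + y)) &
      exists N, forall n, N <= n -> S n].

(* Minimal generators of S: the nonzero elements of S that are not a sum of
   two nonzero elements of S (the unique minimal generating set). *)
Definition min_gen (S : pred nat) (a : nat) : Prop :=
  [/\ S a, 0 < a &
      ~ exists x y, [/\ S x, S y, 0 < x, 0 < y & a = x + y]].

Definition is_multiplicity (S : pred nat) (mu : nat) : Prop :=
  min_gen S mu /\ forall a, min_gen S a -> mu <= a.

Definition is_conductor (S : pred nat) (c : nat) : Prop :=
  (forall n, c <= n -> S n) /\
  (forall m, (forall n, m <= n -> S n) -> c <= m).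

(* Let s be the least element of S in a nonzero class modulo mu; then s - mu
   is not in S, so s < c + mu.  Any t > 0 in S with t - mu not in S is at
   least a2 (the least minimal generator above mu), and is itself a minimal
   generator when t < 2 a2, since both summands of a splitting of t would
   again have this property.  So if s is not a generator, then s = y + z with
   y, z in [a2, c + mu - a2): both are minimal generators other than mu and
   exceed (c + mu) / 3, and as y + z < c + mu the smaller one lies below
   (c + mu) / 2 and the larger below 2 (c + mu) / 3. *)

From mathcomp Require Import all_boot all_order all_algebra.
From mathcomp Require Import zify.
Import GRing.Theory.

Set Implicit Arguments.
Unset Strict Implicit.
Unset Printing Implicit Defensive.

Lemma min_gen_or_split (S : pred nat) (a : nat) : S a -> 0 < a ->
  min_gen S a \/ exists x y, [/\ S x, S y, 0 < x, 0 < y & a = x + y].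
Proof.
move=> Sa a_gt0.
have [/hasP[x]|no_split] :=
  boolP (has (fun x => [&& 0 < x, S x & S (a - x)]) (iota 0 a)).
  rewrite mem_iota => /andP[_ x_lt_a] /and3P[x_gt0 Sx Sax].
  by right; exists x, (a - x); split => //; lia.
left; split => // -[x [y [Sx Sy x_gt0 y_gt0 def_a]]].
apply: (negP no_split); apply/hasP; exists x; first by rewrite mem_iota; lia.
by rewrite x_gt0 Sx (_ : a - x = y) //; lia.
Qed.

Lemma min_gen_ind (S : pred nat) (P : nat -> Prop) :
  (forall a, min_gen S a -> P a) ->
  (forall x y, S x -> S y -> 0 < x -> 0 < y -> P x -> P y -> P (x + y)) ->
  forall t, S t -> 0 < t -> P t.
Proof.
move=> P_gen P_add; elim/ltn_ind => t IH St t_gt0.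
have [t_gen|[x [y [Sx Sy x_gt0 y_gt0 def_t]]]] := min_gen_or_split St t_gt0.
  exact: P_gen.
by rewrite def_t; apply: P_add => //; apply: IH => //; lia.
Qed.

Lemma multiplicity_leq (S : pred nat) (mu : nat) :
  is_multiplicity S mu -> forall t, S t -> 0 < t -> mu <= t.
Proof. by case=> _ mu_min; apply: min_gen_ind => // x y _ _ _ _; lia. Qed.

(* The nonzero part of the Apery set of S with respect to mu: since the
   subtraction is truncated, every t <= mu (in particular 0 and mu) fails the
   test [~~ S (t - mu)]. *)
Definition apery (S : pred nat) (mu t : nat) : bool := S t && ~~ S (t - mu).

Lemma apery_lt_conductor (S : pred nat) (mu c t : nat) :
  (forall n, c <= n -> S n) -> apery S mu t -> t < c + mu.
Proof.
move=> S_ge_c /andP[_]; apply: contraNT; rewrite -leqNgt => le_t.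
by apply: S_ge_c; lia.
Qed.

Section Apery.

Variables (S : pred nat) (mu : nat).
Hypothesis S_ns : numerical_semigroup S.
Hypothesis mu_mult : is_multiplicity S mu.

Let S0 : S 0. Proof. by case: S_ns. Qed.
Let SD x y : S x -> S y -> S (x + y). Proof. by case: S_ns => _ + _; apply. Qed.

Lemma apery_gt_mu t : apery S mu t -> mu < t.
Proof.
case/andP=> _; apply: contraNT; rewrite -leqNgt -subn_eq0 => /eqP ->.
exact: S0.
Qed.

Lemma apery_gt0 t : apery S mu t -> 0 < t.
Proof. by move/apery_gt_mu; apply: leq_ltn_trans. Qed.

Lemma apery_summand x y : S x -> S y -> 0 < x -> apery S mu (x + y) ->
  apery S mu x.
Proof.
move=> Sx Sy x_gt0 /andP[_ S'xy]; rewrite /apery Sx /=.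
apply: contra S'xy => Sx'; rewrite (_ : x + y - mu = (x - mu) + y).
  exact: SD.
by have := multiplicity_leq mu_mult Sx x_gt0; lia.
Qed.

Variable a2 : nat.
Hypothesis a2_le_gen : forall a, min_gen S a -> mu < a -> a2 <= a.

Lemma a2_le_apery t : apery S mu t -> a2 <= t.
Proof.
move=> At; have /andP[St _] := At; have t_gt0 := apery_gt0 At.
move: At; apply: (@min_gen_ind S (fun t => apery S mu t -> a2 <= t)) => //.
  by move=> a a_gen /apery_gt_mu; apply: a2_le_gen.
move=> x y Sx Sy x_gt0 _ IHx _ /(apery_summand Sx Sy x_gt0) /IHx; lia.
Qed.

Lemma apery_min_gen t : apery S mu t -> t < 2 * a2 -> min_gen S t.
Proof.
move=> At t_lt; have /andP[St _] := At.
have [//|[x [y [Sx Sy x_gt0 y_gt0 def_t]]]] :=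
  min_gen_or_split St (apery_gt0 At).
have Ax : apery S mu x by apply: (apery_summand Sx Sy x_gt0); rewrite -def_t.
have Ay : apery S mu y.
  by apply: (apery_summand Sy Sx y_gt0); rewrite addnC -def_t.
by have := a2_le_apery Ax; have := a2_le_apery Ay; lia.
Qed.

Lemma apery_summand_min_gen y z : S y -> S z -> 0 < y -> 0 < z ->
  apery S mu (y + z) -> y + z < 3 * a2 -> [/\ min_gen S y, mu < y & a2 <= y].
Proof.
move=> Sy Sz y_gt0 z_gt0 Ayz yz_lt.
have Ay := apery_summand Sy Sz y_gt0 Ayz.
have Az : apery S mu z by apply: (apery_summand Sz Sy z_gt0); rewrite addnC.
have a2_z := a2_le_apery Az; split; [|exact: apery_gt_mu|exact: a2_le_apery].
by apply: apery_min_gen => //; lia.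
Qed.

Local Open Scope ring_scope.

Lemma apery_exists (x : 'Z_mu) : (1 < mu)%N -> x != 0 ->
  exists2 s, apery S mu s & s%:R = x.
Proof.
move=> mu_gt1 x_neq0; have [_ _ [N S_ge_N]] := S_ns.
have mu0 : mu%:R = 0 :> 'Z_mu by exact: pchar_Zp.
have ex_s : exists s, S s && (s%:R == x).
  exists (N * mu + x)%N; rewrite S_ge_N /=; last by nia.
  by rewrite natrD natrM mu0 mulr0 add0r natr_Zp.
case: (ex_minnP ex_s) => s /andP[Ss /eqP def_x] s_min.
exists s => //; rewrite /apery Ss /=; apply/negP => S's.
have s_gt0 : (0 < s)%N.
  by rewrite lt0n; apply: contra_neq x_neq0 => s0; rewrite -def_x s0.
have mu_le_s := multiplicity_leq mu_mult Ss s_gt0.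
have := s_min (s - mu)%N; rewrite S's -def_x -{2}(subnK mu_le_s) natrD mu0.
by rewrite addr0 eqxx => /(_ isT); lia.
Qed.

End Apery.

Local Open Scope ring_scope.

Theorem proposition2p1 (S : pred nat) (mu c a2 : nat) :
  numerical_semigroup S ->
  is_multiplicity S mu ->
  is_conductor S c ->
  min_gen S a2 -> (mu < a2)%N ->
  (forall a, min_gen S a -> (mu < a)%N -> (a2 <= a)%N) ->
  (c + mu < 3 * a2)%N ->
  forall (Hmu : (1 < mu)%N) (x : 'Z_mu),
    (exists a, min_gen S a /\ (a%:R : 'Z_mu) = x)
    \/ (exists a b,
          (min_gen S a /\ a <> mu /\ (c + mu < 3 * a)%N /\ (2 * a < c + mu)%N) /\
          (min_gen S b /\ b <> mu /\ (c + mu < 3 * b)%N /\ (2 * b < c + mu)%N) /\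
          (a%:R + b%:R : 'Z_mu) = x)
    \/ (exists a b,
          (min_gen S a /\ a <> mu /\ (c + mu < 3 * a)%N /\ (2 * a < c + mu)%N) /\
          (min_gen S b /\ b <> mu /\ (c + mu <= 2 * b)%N /\ (3 * b < 2 * (c + mu))%N) /\
          (a%:R + b%:R : 'Z_mu) = x).
Proof.
move=> S_ns mu_mult [S_ge_c _] _ _ a2_le_gen a2_big mu_gt1 x.
have [->|x_neq0] := eqVneq x 0.
  by left; exists mu; split; [case: mu_mult | exact: pchar_Zp].
have [s As def_x] := apery_exists S_ns mu_mult mu_gt1 x_neq0.
have s_lt := apery_lt_conductor S_ge_c As.
have /andP[Ss _] := As.
have [s_gen|[y [z [Sy Sz y_gt0 z_gt0 def_s]]]] :=
  min_gen_or_split Ss (apery_gt0 S_ns As).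
  by left; exists s.
have Ayz : apery S mu (y + z) by rewrite -def_s.
have Azy : apery S mu (z + y) by rewrite addnC.
have yz_lt : (y + z < 3 * a2)%N by lia.
have zy_lt : (z + y < 3 * a2)%N by rewrite addnC.
have [y_gen mu_lt_y a2_y] := apery_summand_min_gen S_ns mu_mult a2_le_gen
  Sy Sz y_gt0 z_gt0 Ayz yz_lt.
have [z_gen mu_lt_z a2_z] := apery_summand_min_gen S_ns mu_mult a2_le_gen
  Sz Sy z_gt0 y_gt0 Azy zy_lt.
have {}def_x : y%:R + z%:R = x by rewrite -natrD -def_s.
right; clear -def_x def_s s_lt a2_big a2_y a2_z y_gen z_gen mu_lt_y mu_lt_z.
wlog le_yz : y z def_x def_s a2_y a2_z y_gen z_gen mu_lt_y mu_lt_z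
  / (y <= z)%N.
  move=> W; case: (leqP y z) => [|/ltnW]; first exact: W.
  by apply: W => //; rewrite 1?addrC 1?addnC.
have [z_small|z_large] := ltnP (2 * z) (c + mu).
  by left; exists y, z; do !split => //; lia.
by right; exists y, z; do !split => //; lia.
Qed.
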